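(* Let $\Gamma$ be the first Grigorchuk group with generators $a,b,c,d$, acting on the right on $\{0,1\}^{\mathbb N}$, and let $\rho=111\cdots$. For a word $w=w_1\cdots w_n$ over $\{a,b,c,d\}$ set $\delta(w)=\#\{\rho\,w_{i+1}\cdots w_n: i=0,\dots,n\}$, and let $\Delta(n)=\max\{\delta(w): w\text{ a word over }\{a,b,c,d\},\ |w|=n\}$. Let $\eta$ be the real root of $t^3+t^2+t-2$ and $\alpha=\log 2/\log(2/\eta)$. Then $\Delta(n)\preceq n^\alpha$.
   Context: The first Grigorchuk group $\Gamma$ is the group of permutations of $\{0,1\}^{\mathbb N}$ (acting on the right) generated by $a,b,c,d$, defined recursively for $x\in\{0,1\}$ and infinite binary sequences $u$ by: $(xu)a=(1-x)u$; $(0u)b=0(ua)$, $(1u)b=1(uc)$; $(0u)c=0(ua)$, $(1u)c=1(ud)$; $(0u)d=0u$, $(1u)d=1(ub)$. For functions $f,g:\mathbb N\to\mathbb R_+$, $g\preceq f$ means there is $C>0$ with $g(n)\le f(Cn)$ for all sufficiently large $n$. *)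

From mathcomp Require Import all_boot.
From Stdlib Require Import ClassicalEpsilon.

Set Implicit Arguments.
Unset Strict Implicit.
Unset Printing Implicit Defensive.

Inductive gen := Ga | Gb | Gc | Gd.

(* Points of {0,1}^N are functions nat -> bool (false = 0, true = 1). *)
Definition point := nat -> bool.

Definition shift (u : point) : point := fun n => u n.+1.

(* gact g u n = the n-th letter of (u)g, defined by recursion on the
   position n, following the recursive definition of a, b, c, d. *)
Fixpoint gact (g : gen) (u : point) (n : nat) {struct n} : bool :=
  match n with
  | 0 => match g with Ga => ~~ u 0 | _ => u 0 end
  | k.+1 =>
      match g with
      | Ga => u k.+1
      | Gb => if u 0 then gact Gc (shift u) k else gact Ga (shift u) k
      | Gc => if u 0 then gact Gd (shift u) k else gact Ga (shift u) k
      | Gd => if u 0 then gact Gb (shift u) k else u k.+1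
      end
  end.

Definition rho : point := fun _ => true.

(* Right action of a word w = w_1 ... w_n : apply w_1 first, then w_2, ... *)
Definition wact (u : point) (w : seq gen) : point := foldl (fun v g => gact g v) u w.

Definition orbpt (w : seq gen) (i : nat) : point := wact rho (drop i w).

(* i is the first index giving its point (classical decision on equality of
   infinite sequences). *)
Definition is_new (w : seq gen) (i : nat) : bool :=
  if excluded_middle_informative (forall j, j < i -> orbpt w j <> orbpt w i)
  then true else false.

Definition delta (w : seq gen) : nat := count (is_new w) (iota 0 (size w).+1).

Fixpoint words (n : nat) : seq (seq gen) :=
  match n with
  | 0 => [:: [::]]
  | k.+1 => flatten [seq [seq g :: w | g <- [:: Ga; Gb; Gc; Gd]] | w <- words k]
  end.

Definition DeltaG (n : nat) : nat := \max_(w <- words n) delta w.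

From mathcomp Require Import all_boot zify.
From Stdlib Require Import Reals Lra Psatz FunctionalExtensionality Classical ClassicalEpsilon.

(* Every suffix point rho w_{i+1}...w_n of a word w is determined by its first bit x
   and by a suffix point of the section w_x of w at x, so delta(w) <= delta(w_0) + delta(w_1);
   multiplying out adjacent letters from {b, c, d} (which fix rho) only merges points.
   Weight the letters a, b, c, d by 1 - eta^3, eta^3, 1 - eta^2, 1 - eta.  Because
   eta^3 + eta^2 + eta = 2, the sections of a reduced word w satisfy
   nu(w_0) + nu(w_1) <= eta (nu(w) + 1 - eta^3).  The exponent alpha solves 2 (eta/2)^alpha = 1,
   so by concavity of t |-> t^alpha the function G(x) = B (x^alpha - (1 - eta^3)) satisfies
   G(x_0) + G(x_1) <= G(x) whenever x_0 + x_1 <= eta (x + 1 - eta^3) and x is large.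
   Induction on the length then gives delta(w) <= G(nu(w)) <= B |w|^alpha. *)

Set Implicit Arguments.
Unset Strict Implicit.
Unset Printing Implicit Defensive.

Local Open Scope R_scope.

(** * Concavity of powers *)

Lemma Rpower_le_affine a r : 0 <= a <= 1 -> 0 < r -> Rpower r a <= 1 - a + a * r.
Proof.
move=> Ha Hr; rewrite /Rpower.
set s := a * ln r.
(* Average the tangent-line bounds for exp at s, taken at ln r and at 0. *)
have tangent x : exp s * (1 + (x - s)) <= exp x.
  rewrite -(Rplus_minus s x) exp_plus Rplus_minus.
  apply: Rmult_le_compat_l; [exact: Rlt_le (exp_pos s) | exact: exp_ineq1_le].
have := tangent (ln r); have := tangent 0.
rewrite exp_ln // exp_0 => T0 Tr.
have := exp_pos s; rewrite /s in T0 Tr *; nra.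
Qed.

Lemma Rpower_gt0 x a : 0 < Rpower x a.
Proof. exact: exp_pos. Qed.

Lemma Rpower_midpoint_le a u v : 0 <= a <= 1 -> 0 < u -> 0 < v ->
  Rpower u a + Rpower v a <= 2 * Rpower ((u + v) / 2) a.
Proof.
move=> Ha Hu Hv; set m := (u + v) / 2.
have Hm : 0 < m by rewrite /m; lra.
have -> : u = m * (u / m) by field; lra.
have -> : v = m * (v / m) by field; lra.
have Hu' : 0 < u / m by apply: Rdiv_lt_0_compat.
have Hv' : 0 < v / m by apply: Rdiv_lt_0_compat.
rewrite -(Rpower_mult_distr _ _ _ Hm Hu') -(Rpower_mult_distr _ _ _ Hm Hv').
have Huv : u / m + v / m = 2 by rewrite /m; field; lra.
have Pm := Rpower_gt0 m a.
have := Rmult_le_compat_l _ _ _ (Rlt_le _ _ Pm) (Rpower_le_affine Ha Hu').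
have := Rmult_le_compat_l _ _ _ (Rlt_le _ _ Pm) (Rpower_le_affine Ha Hv').
have -> : v / m = 2 - u / m by lra.
set P := Rpower m a; set x := u / m.
have E : P * (1 - a + a * x) + P * (1 - a + a * (2 - x)) = 2 * P by ring.
lra.
Qed.

Lemma Rpower_add_le a x c : 0 <= a <= 1 -> 1 <= x -> 0 <= c ->
  Rpower (x + c) a <= Rpower x a + c.
Proof.
move=> Ha Hx Hc.
have Hcx : 0 <= c / x by apply: Rmult_le_pos; [lra | apply: Rlt_le; apply: Rinv_0_lt_compat; lra].
have -> : x + c = x * (1 + c / x) by field; lra.
rewrite -Rpower_mult_distr; try lra.
have Hpos : 0 < 1 + c / x by lra.
have := Rpower_le_affine Ha Hpos.
have Hxa : Rpower x a <= x.
  by rewrite -{2}(Rpower_1 x); [apply: Rle_Rpower; lra | lra].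
have Hq : Rpower x a * (c / x) <= c.
  have -> : Rpower x a * (c / x) = c * (Rpower x a / x) by field; lra.
  rewrite -{2}(Rmult_1_r c); apply: Rmult_le_compat_l => //.
  apply: (Rmult_le_reg_r x); first lra.
  by rewrite /Rdiv Rmult_assoc Rinv_l; lra.
have := Rpower_gt0 x a; nra.
Qed.

(** * A divide-and-conquer bound *)

Section DivideAndConquer.
Variables e al c B : R.
Hypotheses (e_gt0 : 0 < e) (e_lt1 : e < 1) (al_gt0 : 0 < al) (al_lt1 : al < 1).
Hypotheses (c_ge0 : 0 <= c) (B_ge0 : 0 <= B).
Hypothesis half_scale : Rpower (e / 2) al = / 2.

Let q := Rpower e al.
(* Above the threshold, (1 - q) x^al >= 2 + c. *)
Let Z := (2 + c) / (1 - q).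

Definition threshold := Rpower Z (/ al).

Definition bound_fun x := if Rlt_dec x threshold then B else B * (Rpower x al - c).

Let q_gt0 : 0 < q. Proof. exact: Rpower_gt0. Qed.

Let q_lt1 : q < 1.
Proof.
rewrite /q /Rpower -exp_0; apply: exp_increasing.
have : ln e < 0 by rewrite -ln_1; apply: ln_increasing; lra.
nra.
Qed.

Let Z_ge : 2 + c <= Z.
Proof.
rewrite /Z /Rdiv -{1}(Rmult_1_r (2 + c)); apply: Rmult_le_compat_l; first lra.
rewrite -Rinv_1; apply: Rinv_le_contravar; lra.
Qed.

Lemma threshold_gt1 : 1 < threshold.
Proof.
rewrite /threshold -(Rpower_O Z); last lra.
by apply: Rpower_lt; [lra | apply: Rinv_0_lt_compat].
Qed.

Let Rpower_threshold_le x : threshold <= x -> Z <= Rpower x al.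
Proof.
move=> Hx; have := Rlt_le _ _ threshold_gt1 => H1.
have -> : Z = Rpower threshold al.
  by rewrite /threshold Rpower_mult Rinv_l ?Rpower_1; lra.
apply: Rle_Rpower_l; lra.
Qed.

Lemma bound_fun_below x : x < threshold -> bound_fun x = B.
Proof. by move=> Hx; rewrite /bound_fun; case: Rlt_dec. Qed.

Lemma bound_fun_above x : threshold <= x -> bound_fun x = B * (Rpower x al - c).
Proof. by move=> Hx; rewrite /bound_fun; case: Rlt_dec => // L; lra. Qed.

Let Rpower_child_le x y : threshold <= x -> 0 < y <= e * (x + c) ->
  1 + Rpower y al <= Rpower x al.
Proof.
move=> Hx Hy; have := Rlt_le _ _ threshold_gt1 => H1.
have Hyx : Rpower y al <= q * Rpower (x + c) al.
  by rewrite /q Rpower_mult_distr; [apply: Rle_Rpower_l; lra | lra | lra].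
have := Rpower_add_le (conj (Rlt_le _ _ al_gt0) (Rlt_le _ _ al_lt1)) (Rle_trans _ _ _ H1 Hx) c_ge0.
have := Rpower_threshold_le Hx; have := Z_ge.
have HZ : Z * (1 - q) = 2 + c by rewrite /Z; field; lra.
nra.
Qed.

Lemma bound_fun_split x x0 x1 : threshold <= x -> 0 <= x0 -> 0 <= x1 ->
  x0 + x1 <= e * (x + c) -> bound_fun x0 + bound_fun x1 <= bound_fun x.
Proof.
move=> Hx Hx0 Hx1 Hsum; have := Rlt_le _ _ threshold_gt1 => H1.
have Hal : 0 <= al <= 1 by lra.
have Hxa : 2 + c <= Rpower x al := Rle_trans _ _ _ Z_ge (Rpower_threshold_le Hx).
have Hsum0 : x0 <= e * (x + c) by lra.
have Hsum1 : x1 <= e * (x + c) by lra.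
rewrite (bound_fun_above Hx) {1}/bound_fun {1}/bound_fun.
case: Rlt_dec => L0; case: Rlt_dec => L1 /=.
- nra.
- have x1_gt0 : 0 < x1 by lra.
  have := Rpower_child_le Hx (conj x1_gt0 Hsum1); nra.
- have x0_gt0 : 0 < x0 by lra.
  have := Rpower_child_le Hx (conj x0_gt0 Hsum0); nra.
- have x0_gt0 : 0 < x0 by lra.
  have x1_gt0 : 0 < x1 by lra.
  have := Rpower_midpoint_le Hal x0_gt0 x1_gt0.
  have Hmono : Rpower ((x0 + x1) / 2) al <= Rpower (e / 2 * (x + c)) al.
    by apply: Rle_Rpower_l; lra.
  have Hscale : 2 * Rpower (e / 2 * (x + c)) al = Rpower (x + c) al.
    by rewrite -Rpower_mult_distr ?half_scale; [field | lra | lra].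
  have := Rpower_add_le Hal (Rle_trans _ _ _ H1 Hx) c_ge0.
  nra.
Qed.

Lemma bound_fun_le x n : 0 <= x <= n -> 1 <= n -> bound_fun x <= B * Rpower n al.
Proof.
move=> Hx Hn; have := Rlt_le _ _ threshold_gt1 => H1.
have Hn1 : 1 <= Rpower n al.
  by rewrite -(Rpower_O n); [apply: Rle_Rpower; lra | lra].
rewrite /bound_fun; case: Rlt_dec => Lx /=; first nra.
have : Rpower x al <= Rpower n al by apply: Rle_Rpower_l; lra.
nra.
Qed.

End DivideAndConquer.

Lemma cubic_root_bounds e : e ^ 3 + e ^ 2 + e - 2 = 0 -> 0 < e < 1 /\ 1 < e ^ 2 + e.
Proof.
move=> He; have e_gt0 : 0 < e by case: (Rle_lt_dec e 0) => // ?; nra.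
have e_lt1 : e < 1 by nra.
split; [lra | nra].
Qed.

Lemma log_ratio_bounds e : 0 < e < 1 -> 0 < ln 2 / ln (2 / e) < 1.
Proof.
move=> He.
have ln2_gt0 : 0 < ln 2 by rewrite -ln_1; apply: ln_increasing; lra.
have ln_lt : ln 2 < ln (2 / e).
  apply: ln_increasing; first lra.
  apply: (Rmult_lt_reg_r e); first lra.
  by rewrite /Rdiv Rmult_assoc Rinv_l; lra.
split; first by apply: Rdiv_lt_0_compat; lra.
apply: (Rmult_lt_reg_r (ln (2 / e))); first lra.
by rewrite /Rdiv Rmult_assoc Rinv_l; lra.
Qed.

Lemma Rpower_half_scale e : 0 < e < 2 -> Rpower (e / 2) (ln 2 / ln (2 / e)) = / 2.
Proof.
move=> He; have ln_gt0 : 0 < ln (2 / e).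
  rewrite -ln_1; apply: ln_increasing; first lra.
  apply: (Rmult_lt_reg_r e); first lra.
  by rewrite /Rdiv Rmult_assoc Rinv_l; lra.
have -> : e / 2 = / (2 / e) by field; lra.
rewrite /Rpower ln_Rinv; last by apply: Rdiv_lt_0_compat; lra.
have -> : ln 2 / ln (2 / e) * - ln (2 / e) = - ln 2 by field; lra.
by rewrite exp_Ropp exp_ln; lra.
Qed.

Local Close Scope R_scope.
Local Open Scope nat_scope.

(** * Sections of words *)

Definition isA (g : gen) : bool := if g is Ga then true else false.

(* (x u) g = (gfirst x g) (u w) with w = gsection x g; wsection and wfirst do the same for words. *)
Definition gsection (x : bool) (g : gen) : seq gen :=
  match g with
  | Ga => [::]
  | Gb => if x then [:: Gc] else [:: Ga]
  | Gc => if x then [:: Gd] else [:: Ga]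
  | Gd => if x then [:: Gb] else [::]
  end.

Definition gfirst (x : bool) (g : gen) : bool := if isA g then ~~ x else x.

Fixpoint wsection (x : bool) (w : seq gen) : seq gen :=
  if w is g :: w' then gsection x g ++ wsection (gfirst x g) w' else [::].

Fixpoint wfirst (x : bool) (w : seq gen) : bool :=
  if w is g :: w' then wfirst (gfirst x g) w' else x.

Definition pcons (b : bool) (p : point) : point :=
  fun n => if n is k.+1 then p k else b.

Lemma point_eta (p : point) : p = pcons (p 0) (shift p).
Proof. by apply: functional_extensionality => -[]. Qed.

Lemma gact_head g u : gact g u 0 = gfirst (u 0) g.
Proof. by case: g. Qed.

Lemma wact_cons u g w : wact u (g :: w) = wact (gact g u) w.
Proof. by []. Qed.

Lemma wact_cat u s t : wact u (s ++ t) = wact (wact u s) t.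
Proof. by rewrite /wact foldl_cat. Qed.

Lemma shift_gact g u : shift (gact g u) = wact (shift u) (gsection (u 0) g).
Proof. by apply: functional_extensionality => k; rewrite /shift; case: g => /=; case: (u 0). Qed.

Lemma gact_succ g u k : gact g u k.+1 = wact (shift u) (gsection (u 0) g) k.
Proof. by rewrite -shift_gact. Qed.

Lemma wact_head u w : wact u w 0 = wfirst (u 0) w.
Proof. by elim: w u => [|g w IH] u //; rewrite wact_cons IH gact_head. Qed.

Lemma shift_wact u w : shift (wact u w) = wact (shift u) (wsection (u 0) w).
Proof.
elim: w u => [|g w IH] u //.
by rewrite wact_cons IH shift_gact gact_head /= wact_cat.
Qed.

Lemma wsection_cat x s t : wsection x (s ++ t) = wsection x s ++ wsection (wfirst x s) t.
Proof. by elim: s x => [|g s IH] x //=; rewrite IH catA. Qed.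

Lemma wfirst_cat x s t : wfirst x (s ++ t) = wfirst (wfirst x s) t.
Proof. by elim: s x => [|g s IH] x //=. Qed.

Lemma wfirst_xor x s : wfirst x s = xorb x (wfirst false s).
Proof.
elim: s x => [|g s IH] x /=; first by case: x.
by rewrite IH [wfirst (gfirst false g) s]IH; case: g; case: x; case: (wfirst false s).
Qed.

Lemma wfirstK s : involutive (wfirst^~ s).
Proof. by move=> x; rewrite /= wfirst_xor [wfirst x s]wfirst_xor; case: x; case: (wfirst false s). Qed.

(* x is the first bit that w_1 ... w_i maps to 1 = rho 0. *)
Lemma orbpt_section w i :
  let x := wfirst true (take i w) in
  orbpt w i = pcons (wfirst x w) (orbpt (wsection x w) (size (wsection x (take i w)))).
Proof.
move=> x.
rewrite /orbpt {1}(point_eta (wact rho (drop i w))) shift_wact wact_head.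
have Ew : w = take i w ++ drop i w by rewrite cat_take_drop.
have Hx : wfirst x (take i w) = true by rewrite /x wfirstK.
congr pcons; first by rewrite {2}Ew wfirst_cat Hx.
by rewrite {3}Ew wsection_cat Hx drop_size_cat.
Qed.

Lemma gact_rho g : ~~ isA g -> gact g rho = rho.
Proof.
move=> Hg; apply: functional_extensionality => n.
elim: n g Hg => [|k IH] g Hg; first by case: g Hg.
by rewrite gact_succ; case: g Hg => //= _; apply: IH.
Qed.

Lemma gact_aaK : involutive (gact Ga).
Proof. by move=> v; apply: functional_extensionality => -[|n] //=; rewrite negbK. Qed.

(* The product in the Klein four-group {1, b, c, d}, as a word of length <= 1. *)
Definition kprod (g h : gen) : seq gen :=
  match g, h with
  | Gb, Gc | Gc, Gb => [:: Gd]
  | Gb, Gd | Gd, Gb => [:: Gc]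
  | Gc, Gd | Gd, Gc => [:: Gb]
  | _, _ => [::]
  end.

Lemma gact_kprod g h u : ~~ isA g -> ~~ isA h ->
  gact h (gact g u) = wact u (kprod g h).
Proof.
move=> Hg Hh; apply: functional_extensionality => n.
elim: n u g h Hg Hh => [|k IH] u g h Hg Hh; first by case: g Hg; case: h Hh.
rewrite gact_succ gact_head shift_gact.
have -> : gfirst (u 0) g = u 0 by case: g Hg.
case E: (u 0); case: g Hg; case: h Hh => //= _ _;
  rewrite ?gact_succ ?E //= ?gact_aaK //; exact: IH.
Qed.

(* Multiply out every maximal pair of adjacent letters from {b, c, d}. *)
Fixpoint reduce (w : seq gen) : seq gen :=
  if w is g :: w' then
    let m := reduce w' in
    if isA g then g :: m else
    if m is h :: m' then (if isA h then g :: m else kprod g h ++ m') else g :: m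
  else [::].

Lemma wact_reduce u w : wact u (reduce w) = wact u w.
Proof.
elim: w u => [|g w IH] u //=.
case Hg: (isA g); first by rewrite !wact_cons IH.
case Em: (reduce w) => [|h m']; first by rewrite -Em !wact_cons IH.
case Hh: (isA h); first by rewrite -Em !wact_cons IH.
by rewrite wact_cat -gact_kprod ?Hg ?Hh // -IH Em wact_cons.
Qed.

Definition suffix_point (w : seq gen) (p : point) := exists2 i, i <= size w & p = orbpt w i.

Lemma suffix_point_cons g w p :
  suffix_point (g :: w) p <-> p = wact rho (g :: w) \/ suffix_point w p.
Proof.
split; first by case=> -[|i] Hi ->; [left | right; exists i].
by case=> [->|[i Hi ->]]; [exists 0 | exists i.+1].
Qed.

Lemma suffix_point_cat s t p : suffix_point t p -> suffix_point (s ++ t) p.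
Proof.
case=> i Hi ->; exists (size s + i); first by rewrite size_cat leq_add2l.
by rewrite /orbpt drop_cat ltnNge leq_addr /= addKn.
Qed.

Lemma suffix_point_self t : suffix_point t (wact rho t).
Proof. by exists 0; rewrite /orbpt ?drop0. Qed.

(* Letters from {b, c, d} fix rho, so the suffix points lost by merging g h with g, h
   in {b, c, d} both equal the suffix point just after h. *)
Lemma suffix_point_reduce w p : suffix_point w p -> suffix_point (reduce w) p.
Proof.
elim: w p => [|g w IH] p //=.
move/suffix_point_cons => Hp.
have Hgm : suffix_point (g :: reduce w) p.
  apply/suffix_point_cons; case: Hp => [->|/IH]; last by right.
  by left; rewrite !wact_cons wact_reduce.
case Hg: (isA g) => //.
case Em: (reduce w) Hgm => [|h m'] Hgm //.
case Hh: (isA h) => //.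
apply: suffix_point_cat.
have Hr : wact rho (h :: m') = wact rho m' by rewrite wact_cons gact_rho ?Hh.
move/suffix_point_cons: Hgm => [->|].
  by rewrite wact_cons gact_rho ?Hg // Hr; apply: suffix_point_self.
by move/suffix_point_cons => [->|//]; rewrite Hr; apply: suffix_point_self.
Qed.

(** * Counting suffix points *)

Section FirstOccurrences.
Variable T : Type.
Implicit Types (f : nat -> T) (M : seq T).

Definition first_occ f i : bool :=
  if excluded_middle_informative (forall j, j < i -> f j <> f i) then true else false.

Lemma count_first_occ_le f n M : (forall i, i < n -> List.In (f i) M) ->
  count (first_occ f) (iota 0 n) <= size M.
Proof.
elim: n M => [|n IH] M HM //.
rewrite -{1}addn1 iotaD count_cat /= addn0 {2}/first_occ.
case: excluded_middle_informative => Hnew /=; last first.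
  by rewrite addn0; apply: IH => i Hi; apply: HM; apply: ltnW.
have [M1 [M2 EM]] := List.in_split _ _ (HM n (leqnn _)).
suff : count (first_occ f) (iota 0 n) <= size (M1 ++ M2).
  by rewrite EM !size_cat /=; lia.
apply: IH => i Hi; have := HM i (ltnW Hi); rewrite EM.
case/(List.in_elt_inv (f i) (f n) M1 M2) => // Ei.
by case: (Hnew i Hi).
Qed.

Lemma count_first_occ_cover f n : exists M,
  size M = count (first_occ f) (iota 0 n) /\ forall i, i < n -> List.In (f i) M.
Proof.
elim: n => [|n [M [HM Hcov]]]; first by exists [::].
rewrite -{1}addn1 iotaD count_cat /= addn0 {2}/first_occ.
case: excluded_middle_informative => Hnew /=.
  exists (f n :: M); split; first by rewrite /= HM addn1.
  move=> i; rewrite ltnS leq_eqVlt => /orP [/eqP ->|Hi]; first by left.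
  by right; apply: Hcov.
exists M; split; first by rewrite HM addn0.
move=> i; rewrite ltnS leq_eqVlt => /orP [/eqP ->|]; last exact: Hcov.
apply: NNPP => Hout; apply: Hnew => j Hj Ej.
by apply: Hout; rewrite -Ej; apply: Hcov.
Qed.

End FirstOccurrences.

Lemma In_map (A B : Type) (f : A -> B) x (s : seq A) : List.In x s -> List.In (f x) (map f s).
Proof. by elim: s => //= y s IH [->|/IH]; [left | right]. Qed.

Lemma delta_first_occ w : delta w = count (first_occ (orbpt w)) (iota 0 (size w).+1).
Proof. by []. Qed.

Lemma delta_le_cover w (M : seq point) :
  (forall p, suffix_point w p -> List.In p M) -> delta w <= size M.
Proof.
move=> HM; rewrite delta_first_occ; apply: count_first_occ_le => i Hi.
by apply: HM; exists i.
Qed.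

Lemma delta_cover w : exists M : seq point,
  size M = delta w /\ forall p, suffix_point w p -> List.In p M.
Proof.
have [M [HM Hcov]] := count_first_occ_cover (orbpt w) (size w).+1.
by exists M; rewrite delta_first_occ; split => // p [i Hi ->]; apply: Hcov.
Qed.

Lemma delta_le_size w : delta w <= (size w).+1.
Proof. by rewrite delta_first_occ; apply: leq_trans (count_size _ _) _; rewrite size_iota. Qed.

Lemma delta_le_reduce w : delta w <= delta (reduce w).
Proof.
have [M [<- Hcov]] := delta_cover (reduce w).
by apply: delta_le_cover => p /suffix_point_reduce; apply: Hcov.
Qed.

Lemma delta_le_sections w :
  delta w <= delta (reduce (wsection true w)) + delta (reduce (wsection false w)).
Proof.
have [Mt [<- Ht]] := delta_cover (reduce (wsection true w)).
have [Mf [<- Hf]] := delta_cover (reduce (wsection false w)).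
have -> : size Mt + size Mf =
    size (map (pcons (wfirst true w)) Mt ++ map (pcons (wfirst false w)) Mf).
  by rewrite size_cat !size_map.
apply: delta_le_cover => _ [i Hi ->]; rewrite orbpt_section.
set x := wfirst true (take i w).
have Hp : suffix_point (reduce (wsection x w)) (orbpt (wsection x w) (size (wsection x (take i w)))).
  apply: suffix_point_reduce; eexists; last by [].
  by rewrite -{2}(cat_take_drop i w) wsection_cat size_cat leq_addr.
apply/List.in_app_iff; case: x Hp => Hp; [left | right].
  exact: In_map (Ht _ Hp).
exact: In_map (Hf _ Hp).
Qed.

(** * Reduced words and weights *)

Definition headA (w : seq gen) : bool := if w is h :: _ then isA h else true.

Fixpoint reduced (w : seq gen) : bool :=
  if w is g :: w' then (isA g || headA w') && reduced w' else true.

Lemma reduced_reduce w : reduced (reduce w).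
Proof.
elim: w => [|g w IH] //=.
case Hg: (isA g); first by rewrite /= Hg IH.
case Em: (reduce w) IH => [|h m'] IH; first by rewrite /= orbT.
case Hh: (isA h); first by move: IH; rewrite /= Hh !orbT.
move: IH; rewrite /= Hh /= => /andP [Hm' Hr].
by clear Em; case: g Hg; case: h Hh => //= _ _; rewrite Hm' Hr ?orbT.
Qed.

Lemma size_kprod g h : size (kprod g h) <= 1.
Proof. by case: g; case: h. Qed.

Lemma size_reduce w : size (reduce w) <= size w.
Proof.
elim: w => [|g w IH] //=.
case Hg: (isA g) => //=.
case Em: (reduce w) IH => [|h m'] IH //.
case Hh: (isA h) => //=.
by move: IH; rewrite size_cat /=; have := size_kprod g h; lia.
Qed.

Lemma size_wsection x w : size (wsection x w) <= count (predC isA) w.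
Proof.
elim: w x => [|g w IH] x //=; rewrite size_cat.
by have := IH (gfirst x g); case: g; case: x => /=; lia.
Qed.

Lemma count_reduced w : reduced w -> count (predC isA) w <= count isA w + ~~ headA w.
Proof.
elim: w => [|g w IH] //= /andP [Hgw Hw].
by have := IH Hw; case: g Hgw => /=; case: (headA w) => //= _; lia.
Qed.

Lemma count_nonA_le w : reduced w -> count (predC isA) w <= (count isA w).+1.
Proof. by move=> Hw; have := count_reduced Hw; case: (headA w) => /=; lia. Qed.

Lemma count_nonA_lt w : reduced w -> 1 < size w -> count (predC isA) w < size w.
Proof.
move=> Hw Hs; have := count_reduced Hw.
have := count_predC isA w.
by case: (headA w) => /=; lia.
Qed.

Local Close Scope nat_scope.
Local Open Scope R_scope.

Lemma INR_count_cons (T : Type) (P : pred T) x s :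
  INR (count P (x :: s)) = (if P x then 1 else 0) + INR (count P s).
Proof. by rewrite [count _ _]/=; case: (P x); rewrite ?add1n ?add0n ?S_INR; ring. Qed.

Section Weights.
Variable e : R.
Hypothesis e_cubic : e ^ 3 + e ^ 2 + e - 2 = 0.

Definition lweight (g : gen) : R :=
  match g with Ga => 1 - e ^ 3 | Gb => e ^ 3 | Gc => 1 - e ^ 2 | Gd => 1 - e end.

Fixpoint weight (w : seq gen) : R := if w is g :: w' then lweight g + weight w' else 0.

Lemma weight_cat s t : weight (s ++ t) = weight s + weight t.
Proof. by elim: s => [|g s IH] /=; [ring | rewrite IH; ring]. Qed.

Lemma lweight_bounds g : 1 - e <= lweight g <= 1.
Proof. by have [[? ?] ?] := cubic_root_bounds e_cubic; case: g => /=; nra. Qed.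

Lemma weight_kprod g h : ~~ isA g -> ~~ isA h -> weight (kprod g h) <= lweight g + lweight h.
Proof. by have [[? ?] ?] := cubic_root_bounds e_cubic; case: g; case: h => //= _ _; nra. Qed.

Lemma weight_reduce w : weight (reduce w) <= weight w.
Proof.
elim: w => [|g w IH] /=; first lra.
case Hg: (isA g); first by rewrite /=; lra.
case Em: (reduce w) IH => [|h m'] /= IH; first lra.
case Hh: (isA h); first by rewrite /=; lra.
rewrite weight_cat; have := weight_kprod (negbT Hg) (negbT Hh); lra.
Qed.

Lemma weight_size w : (1 - e) * INR (size w) <= weight w <= INR (size w).
Proof.
elim: w => [|g w IH]; first by rewrite /=; lra.
by rewrite [weight _]/= [size _]/= S_INR; have := lweight_bounds g; lra.
Qed.

Lemma weight_ge0 w : 0 <= weight w.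
Proof.
have [[? ?] _] := cubic_root_bounds e_cubic.
have := weight_size w; have := pos_INR (size w); nra.
Qed.

Lemma weight_gsection x g : weight (gsection x g) + weight (gsection (~~ x) g) =
  e * lweight g + (if isA g then - (e * (1 - e ^ 3)) else e * (1 - e ^ 3)).
Proof.
have e_quartic : e * (e ^ 3 + e ^ 2 + e - 2) = 0 by rewrite e_cubic; ring.
by case: g; case: x => /=; nra.
Qed.

Lemma weight_wsection x w :
  weight (wsection x w) + weight (wsection (~~ x) w) + e * (1 - e ^ 3) * INR (count isA w) =
  e * (weight w + (1 - e ^ 3) * INR (count (predC isA) w)).
Proof.
elim: w x => [|g w IH] x; first by rewrite /=; ring.
rewrite [wsection x _]/= [wsection (~~ x) _]/= [weight (g :: w)]/= !weight_cat !INR_count_cons.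
have -> : gfirst (~~ x) g = ~~ gfirst x g by case: g; case: x.
have := IH (gfirst x g); have := weight_gsection x g.
by case Hg: (isA g) => /=; rewrite ?Hg /=; nra.
Qed.

Lemma weight_sections_le w : reduced w ->
  weight (reduce (wsection true w)) + weight (reduce (wsection false w)) <=
  e * (weight w + (1 - e ^ 3)).
Proof.
move=> Hw; have [[? ?] ?] := cubic_root_bounds e_cubic.
have := weight_reduce (wsection true w); have := weight_reduce (wsection false w).
have := weight_wsection true w.
have Hc : INR (count (predC isA) w) <= INR (count isA w) + 1.
  by rewrite -S_INR; apply/le_INR/leP/count_nonA_le.
have K_ge0 : 0 <= e * (1 - e ^ 3) by nra.
have := Rmult_le_compat_l _ _ _ K_ge0 Hc.
rewrite /=; lra.
Qed.

End Weights.

Section GrigorchukBound.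
Variable e : R.
Hypothesis e_cubic : e ^ 3 + e ^ 2 + e - 2 = 0.

Let al := ln 2 / ln (2 / e).
Let c := 1 - e ^ 3.

Definition growth_const := threshold e al c / (1 - e) + 1.

Let e_gt0 : 0 < e. Proof. by have [[]] := cubic_root_bounds e_cubic. Qed.
Let e_lt1 : e < 1. Proof. by have [[]] := cubic_root_bounds e_cubic. Qed.
Let al_gt0 : 0 < al. Proof. by have [] := log_ratio_bounds (conj e_gt0 e_lt1). Qed.
Let al_lt1 : al < 1. Proof. by have [] := log_ratio_bounds (conj e_gt0 e_lt1). Qed.
Let c_ge0 : 0 <= c. Proof. rewrite /c; nra. Qed.
Let half_scale : Rpower (e / 2) al = / 2.
Proof. by apply: Rpower_half_scale; lra. Qed.
Let thr_gt1 : 1 < threshold e al c := threshold_gt1 e_gt0 e_lt1 al_gt0 c_ge0.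

Lemma growth_const_ge1 : 1 <= growth_const.
Proof.
rewrite /growth_const; have : 0 <= threshold e al c / (1 - e); last lra.
by apply: Rmult_le_pos; [lra | apply: Rlt_le; apply: Rinv_0_lt_compat; lra].
Qed.

Let growth_const_ge0 : 0 <= growth_const. Proof. by have := growth_const_ge1; lra. Qed.

Lemma delta_below_threshold w : weight e w < threshold e al c -> INR (delta w) <= growth_const.
Proof.
move=> Hw; have [Hs _] := weight_size e_cubic w.
have Hd : INR (delta w) <= INR (size w) + 1 by rewrite -S_INR; apply/le_INR/leP/delta_le_size.
have : INR (size w) <= threshold e al c / (1 - e).
  apply: (Rmult_le_reg_r (1 - e)); first lra.
  by rewrite /Rdiv Rmult_assoc Rinv_l; lra.
by rewrite /growth_const; lra.
Qed.

Lemma size_above_threshold w : threshold e al c <= weight e w -> (1 < size w)%nat.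
Proof.
move=> Hw; have [_ Hs] := weight_size e_cubic w.
have : 1 < INR (size w) by lra.
by rewrite -/(INR 1) => /INR_lt /ltP.
Qed.

Lemma delta_le_bound_fun n w : (size w <= n)%nat -> reduced w ->
  INR (delta w) <= bound_fun e al c growth_const (weight e w).
Proof.
elim: n w => [|n IH] w Hs Hw.
all: have [Hx|Hx] := Rlt_le_dec (weight e w) (threshold e al c);
  first by rewrite bound_fun_below //; apply: delta_below_threshold.
  by exfalso; have := size_above_threshold Hx; lia.
have Hs2 := size_above_threshold Hx.
have Hsec x : (size (reduce (wsection x w)) <= n)%nat.
  have := size_reduce (wsection x w); have := size_wsection x w.
  have := count_nonA_lt Hw Hs2; lia.
have Hdelta : INR (delta w) <=
    INR (delta (reduce (wsection true w))) + INR (delta (reduce (wsection false w))).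
  by rewrite -plus_INR; apply/le_INR/leP/delta_le_sections.
have := IH _ (Hsec true) (reduced_reduce _); have := IH _ (Hsec false) (reduced_reduce _).
have := bound_fun_split e_gt0 e_lt1 al_gt0 al_lt1 c_ge0 growth_const_ge0 half_scale Hx
  (weight_ge0 e_cubic _) (weight_ge0 e_cubic _) (weight_sections_le e_cubic Hw).
lra.
Qed.

Lemma delta_le_Rpower_size w : (0 < size w)%nat ->
  INR (delta w) <= growth_const * Rpower (INR (size w)) al.
Proof.
move=> Hs; have Hn : 1 <= INR (size w) by rewrite -/(INR 1); apply/le_INR/leP.
have Hred : INR (delta w) <= INR (delta (reduce w)) by apply/le_INR/leP/delta_le_reduce.
have := delta_le_bound_fun (leqnn _) (reduced_reduce w).
have := weight_reduce e_cubic w; have := weight_size e_cubic w.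
have := weight_ge0 e_cubic (reduce w) => H0 [_ Hsz] Hle Hb.
have := bound_fun_le e_gt0 e_lt1 al_gt0 c_ge0 growth_const_ge0 (conj H0 (Rle_trans _ _ _ Hle Hsz)) Hn.
lra.
Qed.

End GrigorchukBound.

Lemma all_flatten (T : Type) (a : pred T) (L : seq (seq T)) :
  all a (flatten L) = all (all a) L.
Proof. by elim: L => //= s L IH; rewrite all_cat IH. Qed.

Lemma size_words n : all (fun w => size w == n) (words n).
Proof.
elim: n => [|n IH] //=; rewrite all_flatten all_map.
by apply: sub_all IH => w /= /eqP ->; rewrite !eqxx.
Qed.

Lemma INR_bigmax_le (I : Type) (P : pred I) (F : I -> nat) (r : seq I) (b : R) :
  0 <= b -> all P r -> (forall i, P i -> INR (F i) <= b) ->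
  INR (\max_(i <- r) F i)%nat <= b.
Proof.
move=> Hb Hr HF; elim: r Hr => [|i r IH] /=; first by rewrite big_nil.
by case/andP => Pi Pr; rewrite big_cons /maxn; case: ifP => _; [apply: IH | apply: HF].
Qed.

(* The statement reads [<=] on [nat] as Stdlib's [le], not as ssrnat's [leq]. *)
Import Corelib.Init.Peano.
Local Open Scope R_scope.

Theorem proposition4p4 (eta : R) :
  (eta ^ 3 + eta ^ 2 + eta - 2 = 0)%R ->
  let alpha := (ln 2 / ln (2 / eta))%R in
  exists C : R, (0 < C)%R /\ exists N : nat, forall n : nat, (N <= n)%nat ->
    (INR (DeltaG n) <= Rpower (C * INR n) alpha)%R.
Proof.
move=> He alpha.
have [[e_gt0 e_lt1] _] := cubic_root_bounds He.
have [al_gt0 _] := log_ratio_bounds (conj e_gt0 e_lt1).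
have al_ne0 : alpha <> 0 by rewrite /alpha; lra.
have B_gt0 : 0 < growth_const eta by have := growth_const_ge1 He; lra.
exists (Rpower (growth_const eta) (/ alpha)); split; first exact: Rpower_gt0.
exists 1%nat => n Hn; have n_gt0 : 0 < INR n by apply: lt_0_INR.
rewrite -Rpower_mult_distr ?Rpower_mult ?Rinv_l ?Rpower_1 //; last exact: Rpower_gt0.
apply: (INR_bigmax_le (P := fun w => size w == n)) (size_words n) _.
  by have := Rpower_gt0 (INR n) alpha; nra.
by move=> w /eqP Hw; rewrite -Hw; apply: (delta_le_Rpower_size He); rewrite Hw; apply/ltP.
Qed.
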